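(* For every prime $p$ and $n\geq1$, the pseudovariety $\llbracket\mathbb{Z}_{p^n}\rrbracket$ is join irreducible and \[\operatorname{Excl}(\mathbb{Z}_{p^n})=\llbracket(x^{(p')^\omega})^{p^{n-1}}\approx x^\omega\rrbracket.\]
   Context: $\mathbb{Z}_m$ is the cyclic group of order $m$. A pseudovariety is a class of finite semigroups closed under finite direct products, subsemigroups and homomorphic images; $\llbracket S\rrbracket$ is the pseudovariety generated by $S$, and $\llbracket\Sigma\rrbracket$ the pseudovariety defined by pseudoidentities $\Sigma$. A pseudovariety $\mathbf{V}$ is join irreducible if for every set $\mathscr{X}$ of pseudovarieties, $\mathbf{V}\subseteq\bigvee\mathscr{X}$ implies $\mathbf{V}\subseteq\mathbf{X}$ for some $\mathbf{X}\in\mathscr{X}$; $\operatorname{Excl}(S)$ is the class of finite semigroups $T$ with $S\notin\llbracket T\rrbracket$. $x^\omega$ is the idempotent power. $p'$ denotes the set of all primes other than $p$; for a set $\pi=\{p_1,p_2,\dots\}$ of primes, $x^{\pi^\omega}$ is the limit in the free profinite semigroup on $\{x\}$ of $x^{(p_1\cdots p_k)^{k!}}$; for an element $s$ of a finite semigroup, $s^{\pi^\omega}$ generates the $\pi'$-primary component of the cyclic group generated by $s^{\omega+1}$ (so $s^{(p')^\omega}$ generates its $p$-primary component). *)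

From mathcomp Require Import all_boot all_algebra.
Set Implicit Arguments. Unset Strict Implicit. Unset Printing Implicit Defensive.

Record finSemigroup := FinSemigroup {
  sg_carrier :> finType;
  sg_op : sg_carrier -> sg_carrier -> sg_carrier;
  sg_opA : associative sg_op }.

Definition sgclass := finSemigroup -> Prop.

Definition sg_hom (S T : finSemigroup) (f : S -> T) : Prop :=
  forall x y, f (sg_op x y) = sg_op (f x) (f y).

Definition prod_op (S T : finSemigroup) (x y : (S * T)%type) : (S * T)%type :=
  (sg_op x.1 y.1, sg_op x.2 y.2).
Lemma prod_opA (S T : finSemigroup) : associative (@prod_op S T).
Proof. by move=> [a b] [c d] [e f]; rewrite /prod_op /= !sg_opA. Qed.
Definition sg_prod (S T : finSemigroup) : finSemigroup :=
  FinSemigroup (@prod_opA S T).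

Lemma unit_opA : associative (fun _ _ : unit => tt). Proof. by []. Qed.
Definition sg_unit : finSemigroup := FinSemigroup unit_opA.

(* pseudovariety: closed under finite direct products (the empty product,
   i.e. the trivial semigroup, and binary products), subsemigroups (up to
   isomorphism: domains of injective homomorphisms) and homomorphic images *)
Definition pseudovariety (V : sgclass) : Prop :=
  [/\ V sg_unit,
      (forall S T : finSemigroup, V S -> V T -> V (sg_prod S T)),
      (forall (S T : finSemigroup) (f : T -> S), sg_hom f -> injective f -> V S -> V T) &
      (forall (S T : finSemigroup) (f : S -> T), sg_hom f -> (forall y, exists x, f x = y) -> V S -> V T)].

Definition subclass (V W : sgclass) : Prop := forall S, V S -> W S.

Definition gen_pv (S : finSemigroup) : sgclass :=
  fun T => forall V, pseudovariety V -> V S -> V T.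

Definition pv_join (X : sgclass -> Prop) : sgclass :=
  fun T => forall V, pseudovariety V ->
    (forall W, X W -> subclass W V) -> V T.

Definition join_irreducible (V : sgclass) : Prop :=
  forall X : sgclass -> Prop, (forall W, X W -> pseudovariety W) ->
    subclass V (pv_join X) -> exists2 W, X W & subclass V W.

Definition Excl (S : finSemigroup) : sgclass := fun T => ~ gen_pv T S.

(* s ^ k for k >= 1 (spow s 0 = s, never used) *)
Definition spow (S : finSemigroup) (s : S) (k : nat) : S :=
  iter k.-1 (sg_op s) s.

Definition is_omega (S : finSemigroup) (s e : S) : Prop :=
  sg_op e e = e /\ exists2 k, 0 < k & e = spow s k.

Lemma next_pprime_ex (p m : nat) : exists q, [&& prime q, q != p & m < q].
Proof.
case: (prime_above (maxn m p)) => q; rewrite gtn_max => /andP[mq pq] prq.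
by exists q; rewrite prq mq andbT (gtn_eqF pq).
Qed.

Definition next_pprime (p m : nat) : nat := ex_minn (next_pprime_ex p m).

(* pprime p i = p_{i+1}, the (i+1)-th element of p' in increasing order *)
Fixpoint pprime (p i : nat) : nat :=
  match i with
  | 0 => next_pprime p 0
  | i'.+1 => next_pprime p (pprime p i')
  end.

(* (p_1 ... p_k)^(k!), whose limit defines x^{(p')^omega} *)
Definition pprime_exp (p k : nat) : nat :=
  (\prod_(i < k) pprime p i) ^ k`!.

(* In a finite (discrete) semigroup a sequence converges to t iff it is
   eventually equal to t. *)
Definition eventually_eq (S : finSemigroup) (u : nat -> S) (t : S) : Prop :=
  exists K, forall k, K <= k -> u k = t.

(* T satisfies (x^{(p')^omega})^{p^(n-1)} = x^omega: for every s, the value of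
   the left side at s, i.e. lim_k (s^{(p_1...p_k)^{k!}})^{p^(n-1)}
   = lim_k s^{(p_1...p_k)^{k!} * p^(n-1)}, equals s^omega. *)
Definition sat_Zpn_identity (p n : nat) (T : finSemigroup) : Prop :=
  forall (s e : T), is_omega s e ->
    eventually_eq (fun k => spow s (pprime_exp p k * p ^ n.-1)) e.

(* the cyclic group Z_m (m >= 2) as a finite semigroup *)
Definition sg_Z (m : nat) : finSemigroup :=
  FinSemigroup (@GRing.addrA 'Z_m).

From mathcomp Require Import all_boot all_algebra.
From mathcomp Require Import zify.
From Stdlib Require Import Classical.
Set Implicit Arguments. Unset Strict Implicit. Unset Printing Implicit Defensive.
Import GRing.Theory.

(* The powers of an element s of a finite semigroup T are eventually periodic,
   with some period m, and s^omega is the idempotent of that cycle.  The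
   exponents (p_1 ... p_k)^(k!) p^(n-1) are eventually multiples of m (and
   large) exactly when p^n does not divide m, so T fails the pseudoidentity iff
   some element has a period divisible by p^n; the cycle of such an element is
   a copy of Z_m and contains Z_(p^n).  Hence Excl(Z_(p^n)) is the class of
   models of the pseudoidentity, a pseudovariety.  Finally, whenever Excl(S) is
   a pseudovariety, [S] is join irreducible: if S lies in no member of X, all
   members of X lie in Excl(S), hence so does their join. *)

(* ipow s k is s^(k+1): the shifted exponent avoids the junk value spow s 0. *)
Definition ipow (T : finSemigroup) (s : T) (k : nat) : T := iter k (sg_op s) s.

Section Powers.
Variable T : finSemigroup.
Implicit Types s e : T.

Lemma spowE s k : spow s k = ipow s k.-1.
Proof. by []. Qed.

Lemma ipowS s k : ipow s k.+1 = sg_op s (ipow s k).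
Proof. by []. Qed.

Lemma ipowD s a b : ipow s (a + b).+1 = sg_op (ipow s a) (ipow s b).
Proof. by elim: a => [|a IH]; rewrite ?add0n ?addSn ipowS // IH sg_opA. Qed.

Lemma ipow_shift s u v c : ipow s u = ipow s v -> ipow s (u + c) = ipow s (v + c).
Proof. by case: c => [|c] E; rewrite ?addn0 // !addnS !ipowD E. Qed.

Lemma ipowM s a b : ipow (ipow s a) b = ipow s (a.+1 * b.+1).-1.
Proof.
elim: b => [|b IH]; first by rewrite muln1.
by rewrite ipowS IH -ipowD; congr ipow; nia.
Qed.

Lemma ipow_idem e k : sg_op e e = e -> ipow e k = e.
Proof. by move=> idem_e; elim: k => [|k IH] //; rewrite ipowS IH idem_e. Qed.

Lemma idem_ipow_eq s a b :
  sg_op (ipow s a) (ipow s a) = ipow s a -> sg_op (ipow s b) (ipow s b) = ipow s b ->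
  ipow s a = ipow s b.
Proof.
by move=> idem_a idem_b; rewrite -(ipow_idem b idem_a) -(ipow_idem a idem_b) !ipowM mulnC.
Qed.

End Powers.

Lemma spow_morph (S T : finSemigroup) (f : S -> T) (s : S) k :
  sg_hom f -> f (spow s k) = spow (f s) k.
Proof. by move=> hom_f; rewrite /spow; elim: k.-1 => //= j <-; apply: hom_f. Qed.

Lemma spow_pair (S T : finSemigroup) (x : S) (y : T) k :
  @spow (sg_prod S T) (x, y) k = (spow x k, spow y k).
Proof. by rewrite /spow; elim: k.-1 => //= j ->. Qed.

Lemma is_omega_morph (S T : finSemigroup) (f : S -> T) (s e : S) :
  sg_hom f -> is_omega s e -> is_omega (f s) (f e).
Proof.
move=> hom_f [idem_e [k k_gt0 def_e]]; split; last by exists k; rewrite // def_e spow_morph.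
by rewrite -hom_f idem_e.
Qed.

Section Period.
Variables (T : finSemigroup) (s : T).

(* The index of s is at most #|T|, so s^(#|T|+1) already lies on the cycle. *)
Definition is_period d := (0 < d) && (ipow s (#|T| + d) == ipow s #|T|).

Lemma is_period_ex : exists d, is_period d.
Proof.
have /injectivePn[i [j neq_ij eq_ij]] : ~~ injectiveb (fun i : 'I_#|T|.+1 => ipow s i).
  by apply/injectiveP => /leq_card; rewrite card_ord ltnn.
have cycle_ij (a b : 'I_#|T|.+1) : a < b -> ipow s a = ipow s b -> exists d, is_period d.
  move=> lt_ab /esym/(ipow_shift (#|T| - a)) E.
  exists (b - a); rewrite /is_period subn_gt0 lt_ab /=; apply/eqP.
  have le_aT : a <= #|T| by rewrite -ltnS.
  by move: E; rewrite subnKC //; have -> : b + (#|T| - a) = #|T| + (b - a) by lia.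
case: (ltngtP i j) => [lt_ij|lt_ji|/val_inj eq_ij'].
- exact: cycle_ij lt_ij eq_ij.
- exact: cycle_ij lt_ji (esym eq_ij).
- by rewrite eq_ij' eqxx in neq_ij.
Qed.

Definition period := ex_minn is_period_ex.

Lemma period_gt0 : 0 < period.
Proof. by rewrite /period; case: ex_minnP => m /andP[]. Qed.

Lemma ipow_period : ipow s (#|T| + period) = ipow s #|T|.
Proof. by rewrite /period; case: ex_minnP => m /andP[_ /eqP]. Qed.

Lemma period_min d : 0 < d -> ipow s (#|T| + d) = ipow s #|T| -> period <= d.
Proof.
by move=> d_gt0 E; rewrite /period; case: ex_minnP => m _; apply; rewrite /is_period d_gt0 E eqxx.
Qed.

Lemma ipow_addMperiod x j : #|T| <= x -> ipow s (x + j * period) = ipow s x.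
Proof.
move=> le_Tx; elim: j => [|j IH]; first by rewrite addn0.
have -> : x + j.+1 * period = #|T| + period + (x - #|T| + j * period) by nia.
rewrite (ipow_shift _ ipow_period) -IH; congr ipow; lia.
Qed.

Lemma ipow_mod_period x : #|T| <= x -> ipow s x = ipow s (#|T| + (x - #|T|) %% period).
Proof.
move=> le_Tx; rewrite -[RHS](ipow_addMperiod ((x - #|T|) %/ period)) ?leq_addr //.
by congr ipow; have := divn_eq (x - #|T|) period; lia.
Qed.

Lemma ipow_period_inj a b : a < period -> b < period ->
  ipow s (#|T| + a) = ipow s (#|T| + b) -> a = b.
Proof.
wlog lt_ab : a b / a < b.
  move=> W lt_a lt_b E; case: (ltngtP a b) => [lt_ab|lt_ba|//].
  - exact: W.
  - exact/esym/W.
move=> _ lt_b /(ipow_shift (period - b)).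
rewrite -!addnA subnKC ?(ltnW lt_b) // ipow_period => E.
have /period_min/(_ E) : 0 < a + (period - b) by lia.
lia.
Qed.

Lemma ipow_eq_mod x y : #|T| <= x -> #|T| <= y ->
  ipow s x = ipow s y <-> x = y %[mod period].
Proof.
move=> le_Tx le_Ty; rewrite (ipow_mod_period le_Tx) (ipow_mod_period le_Ty).
have lt_mod z : z %% period < period by rewrite ltn_mod period_gt0.
split=> [/ipow_period_inj E | E].
- apply/eqP; rewrite -(subnKC le_Tx) -(subnKC le_Ty) eqn_modDl.
  by apply/eqP/E.
- have /eqP := E; rewrite -(subnKC le_Tx) -(subnKC le_Ty) eqn_modDl => /eqP.
  by rewrite !subnKC // => ->.
Qed.

Definition omega_exp := (period * #|T|.+1).-1.

Definition sg_omega := ipow s omega_exp.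

Lemma omega_expS : omega_exp.+1 = period * #|T|.+1.
Proof. by rewrite prednK // muln_gt0 period_gt0. Qed.

Lemma omega_exp_ge : #|T| <= omega_exp.
Proof. by have := period_gt0; rewrite /omega_exp; nia. Qed.

Lemma ipow_omega N : #|T| <= N -> period %| N.+1 -> ipow s N = sg_omega.
Proof.
move=> le_TN dvd_N; apply/ipow_eq_mod => //; first exact: omega_exp_ge.
by apply/eqP; rewrite -(eqn_modDr 1) !addn1 omega_expS modnMr.
Qed.

Lemma sg_omega_idem : sg_op sg_omega sg_omega = sg_omega.
Proof.
rewrite -ipowD; apply: ipow_omega; first by have := omega_exp_ge; lia.
by apply/dvdnP; exists (2 * #|T|.+1); have := omega_expS; nia.
Qed.

Lemma is_omega_sg_omega : is_omega s sg_omega.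
Proof. by split; [exact: sg_omega_idem | exists omega_exp.+1]. Qed.

Lemma is_omegaE e : is_omega s e -> e = sg_omega.
Proof.
case=> idem_e [k _ def_e]; rewrite def_e spowE in idem_e *.
exact: idem_ipow_eq idem_e sg_omega_idem.
Qed.

Lemma Zp_embedding M : 1 < M -> M %| period ->
  exists f : sg_Z M -> T, sg_hom f /\ injective f.
Proof.
move=> M_gt1 /dvdnP[r def_period].
have r_gt0 : 0 < r by have := period_gt0; rewrite def_period muln_gt0 => /andP[].
have val_lt (j : 'Z_M) : val j < M by case: j => x /=; rewrite Zp_cast.
have val_add (a b : 'Z_M) : val (a + b)%R = (val a + val b) %% M.
  by rewrite /=; move: (val a + val b) => x; rewrite Zp_cast.
have le_T j : #|T| <= j * r + omega_exp by apply: leq_trans omega_exp_ge (leq_addl _ _).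
(* j is sent to s^omega * s^(j r), in the cyclic group of s^omega * s. *)
exists (fun j => ipow s (val j * r + omega_exp)); split.
- move=> a b; cbv beta; rewrite -[sg_op a b]/(a + b)%R val_add -ipowD.
  apply/ipow_eq_mod; [exact: le_T | have := omega_exp_ge; lia |].
  rewrite def_period muln_modl (mulnC r M) modnDml.
  have -> : (val a * r + omega_exp + (val b * r + omega_exp)).+1
          = #|T|.+1 * (M * r) + ((val a + val b) * r + omega_exp).
    by have := omega_expS; rewrite def_period; nia.
  by rewrite modnMDl.
- move=> a b /ipow_eq_mod E; apply: val_inj.
  have /eqP := E (le_T _) (le_T _).
  rewrite eqn_modDr def_period (mulnC r M) -!muln_modl eqn_pmul2r //.
  by rewrite !modn_small // => /eqP.
Qed.

End Period.

Section PrimeEnumeration.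
Variable p : nat.

Lemma next_pprimeP m :
  [/\ prime (next_pprime p m), next_pprime p m != p, m < next_pprime p m &
      forall q, prime q -> q != p -> m < q -> next_pprime p m <= q].
Proof.
rewrite /next_pprime; case: ex_minnP => q /and3P[pr_q neq_qp lt_mq] min_q.
by split=> // r pr_r neq_rp lt_mr; apply: (min_q r); rewrite pr_r neq_rp lt_mr.
Qed.

Lemma pprime_prime i : prime (pprime p i) /\ pprime p i != p.
Proof. by case: i => [|i]; [case: (next_pprimeP 0) | case: (next_pprimeP (pprime p i))]. Qed.

Lemma pprime_gt i : i < pprime p i.
Proof.
elim: i => [|i IH] /=; first by case: (next_pprimeP 0).
by case: (next_pprimeP (pprime p i)) => _ _ lt_i _; apply: leq_ltn_trans lt_i.
Qed.

Lemma pprime_onto q : prime q -> q != p -> exists i, pprime p i = q.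
Proof.
move=> pr_q neq_qp.
suff /(_ q (ltnW (pprime_gt q))) : forall j, q <= pprime p j -> exists i, pprime p i = q by [].
elim=> [|j IH] /= le_q.
  exists 0; apply/eqP; rewrite eqn_leq le_q andbT.
  by case: (next_pprimeP 0) => _ _ _ ->; rewrite ?prime_gt0.
case: (leqP q (pprime p j)) => [/IH // | lt_jq].
exists j.+1; apply/eqP; rewrite eqn_leq le_q andbT.
by case: (next_pprimeP (pprime p j)) => _ _ _ ->.
Qed.

End PrimeEnumeration.

Definition Zpn_exp (p n k : nat) : nat := pprime_exp p k * p ^ n.-1.

Section ExponentSequence.
Variable p : nat.
Hypothesis pr_p : prime p.

Lemma expn_prime_gt1 n : 0 < n -> 1 < p ^ n.
Proof. by move=> n_gt0; rewrite -(expn0 p) ltn_exp2l // prime_gt1. Qed.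

Lemma pprime_exp_gt k : k < pprime_exp p k.
Proof.
have le_prod : 2 ^ k <= \prod_(i < k) pprime p i.
  elim: k => [|k IH]; first by rewrite big_ord0.
  by rewrite big_ord_recr expnSr leq_mul // prime_gt1 //; case: (pprime_prime p k).
apply: leq_trans (ltn_expl k (isT : 1 < 2)) (leq_trans le_prod _).
by rewrite -{1}(expn1 (\prod_(i < k) _)) leq_pexp2l ?fact_gt0 // (leq_trans _ le_prod) ?expn_gt0.
Qed.

Lemma coprime_pprime_exp k : coprime p (pprime_exp p k).
Proof.
rewrite coprimeXr //; elim/big_ind: _ => [|a b|i _]; first exact: coprimen1.
  by rewrite coprimeMr => -> ->.
by case: (pprime_prime p i) => pr_i neq_ip; rewrite prime_coprime // dvdn_prime2 // eq_sym.
Qed.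

Lemma dvdn_pprime_prod q k : prime q -> q != p -> q <= k -> q %| \prod_(i < k) pprime p i.
Proof.
move=> pr_q neq_qp le_qk; have [i def_q] := pprime_onto pr_q neq_qp.
have lt_ik : i < k by rewrite (leq_trans _ le_qk) // -def_q pprime_gt.
by rewrite (bigD1 (Ordinal lt_ik)) //= def_q dvdn_mulr.
Qed.

Lemma Zpn_exp_gt n k : k < Zpn_exp p n k.
Proof. by rewrite (leq_trans (pprime_exp_gt k)) // leq_pmulr // expn_gt0 prime_gt0. Qed.

Lemma logn_Zpn_exp n k : logn p (Zpn_exp p n k) = n.-1.
Proof. by rewrite logn_Gauss ?coprime_pprime_exp // pfactorK. Qed.

Lemma dvdn_Zpn_exp n m k : 0 < m -> ~~ (p ^ n %| m) -> m <= k -> m %| Zpn_exp p n k.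
Proof.
move=> m_gt0 ndvd le_mk; apply/dvdn_partP => // q; rewrite mem_primes => /and3P[pr_q _ dvd_qm].
rewrite p_part; have [->|neq_qp] := eqVneq q p.
  by move: ndvd; rewrite pfactor_dvdn // -ltnNge => lt_n; apply/dvdn_mull/dvdn_exp2l; lia.
have le_log : logn q m <= k`! by have := ltn_logl q m_gt0; have := fact_geq k; lia.
apply/dvdn_mulr/(dvdn_trans (dvdn_exp2l q le_log))/dvdn_exp2r/dvdn_pprime_prod => //.
by rewrite (leq_trans _ le_mk) // dvdn_leq.
Qed.

End ExponentSequence.

Lemma gen_pv_refl (S : finSemigroup) : gen_pv S S.
Proof. by move=> V _. Qed.

Lemma gen_pv_of_embedding (S T : finSemigroup) (f : S -> T) :
  sg_hom f -> injective f -> gen_pv T S.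
Proof. by move=> hom_f inj_f V [_ _ closed_sub _]; apply: closed_sub hom_f inj_f. Qed.

Definition sat_omega_identity (N : nat -> nat) (T : finSemigroup) : Prop :=
  forall s e : T, is_omega s e -> eventually_eq (fun k => spow s (N k)) e.

Lemma sat_omega_identity_pv N : pseudovariety (sat_omega_identity N).
Proof.
split.
- by move=> s e _; exists 0 => k _; case: (spow _ _); case: e.
- move=> S T satS satT [s1 s2] [e1 e2] om.
  have [K1 ev1] := satS _ _ (@is_omega_morph (sg_prod S T) S fst _ _ (fun _ _ => erefl) om).
  have [K2 ev2] := satT _ _ (@is_omega_morph (sg_prod S T) T snd _ _ (fun _ _ => erefl) om).
  by exists (maxn K1 K2) => k; rewrite geq_max spow_pair => /andP[/ev1 -> /ev2 ->].
- move=> S T f hom_f inj_f satS s e om.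
  have [K ev] := satS _ _ (is_omega_morph hom_f om).
  by exists K => k /ev; rewrite -spow_morph //; apply: inj_f.
- move=> S T f hom_f onto_f satS t e om.
  have [x def_t] := onto_f t.
  have [K ev] := satS _ _ (is_omega_sg_omega x).
  exists K => k /ev ev_k; rewrite (is_omegaE om) -def_t -spow_morph // ev_k.
  exact: is_omegaE (is_omega_morph hom_f (is_omega_sg_omega x)).
Qed.

Lemma sat_Zpn_identityE p n : sat_Zpn_identity p n = sat_omega_identity (Zpn_exp p n).
Proof. by []. Qed.

Lemma val_spow_Z1 M N : 1 < M -> 0 < N -> val (spow (1%R : sg_Z M) N) = N %% M.
Proof.
move=> M_gt1; case: N => // N _; rewrite -(val_Zp_nat M_gt1); congr val.
by rewrite /spow /=; elim: N => [|N IH] //=; rewrite IH [in RHS]mulrS.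
Qed.

Lemma Zpn_not_sat p n : prime p -> 0 < n -> ~ sat_Zpn_identity p n (sg_Z (p ^ n)).
Proof.
move=> pr_p n_gt0 sat; have M_gt1 := expn_prime_gt1 pr_p n_gt0.
have om : is_omega (1%R : sg_Z (p ^ n)) 0%R.
  split; first exact: addr0.
  by exists (p ^ n); [exact: ltnW | apply: val_inj; rewrite val_spow_Z1 ?modnn // ltnW].
have [K /(_ K (leqnn K))/(congr1 val)] := sat _ _ om.
have Zpn_exp_gt0 : 0 < Zpn_exp p n K by apply: leq_ltn_trans (Zpn_exp_gt pr_p n K).
rewrite val_spow_Z1 // => /eqP; rewrite -/(dvdn _ _) pfactor_dvdn // logn_Zpn_exp //.
by lia.
Qed.

Lemma Zpn_identity_at p n (T : finSemigroup) (s : T) : prime p -> ~~ (p ^ n %| period s) ->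
  eventually_eq (fun k => spow s (Zpn_exp p n k)) (sg_omega s).
Proof.
move=> pr_p ndvd; exists (period s + #|T|) => k le_k.
have lt_k := Zpn_exp_gt pr_p n k.
rewrite spowE; apply: ipow_omega; first lia.
by rewrite prednK ?dvdn_Zpn_exp ?period_gt0 //; lia.
Qed.

Lemma gen_Zpn_of_not_sat p n (T : finSemigroup) : prime p -> 0 < n ->
  ~ sat_Zpn_identity p n T -> gen_pv T (sg_Z (p ^ n)).
Proof.
move=> pr_p n_gt0 nsat.
have [s [e [om not_ev]]] : exists (s e : T), is_omega s e /\
    ~ eventually_eq (fun k => spow s (Zpn_exp p n k)) e.
  by apply: NNPP => none; apply: nsat => s e om; apply: NNPP => not_ev; apply: none; exists s, e.
rewrite (is_omegaE om) in not_ev.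
have [dvd | ndvd] := boolP (p ^ n %| period s); last by case: not_ev; apply: Zpn_identity_at.
have [f [hom_f inj_f]] := Zp_embedding (expn_prime_gt1 pr_p n_gt0) dvd.
exact: gen_pv_of_embedding hom_f inj_f.
Qed.

Lemma Excl_Zpn p n (T : finSemigroup) : prime p -> 0 < n ->
  Excl (sg_Z (p ^ n)) T <-> sat_Zpn_identity p n T.
Proof.
move=> pr_p n_gt0; split=> [excl | sat gen].
- by apply: NNPP => nsat; apply: excl; apply: gen_Zpn_of_not_sat.
- apply: (Zpn_not_sat pr_p n_gt0); apply: gen sat.
  by rewrite sat_Zpn_identityE; apply: sat_omega_identity_pv.
Qed.

Lemma pseudovariety_equiv (V W : sgclass) :
  (forall T, V T <-> W T) -> pseudovariety V -> pseudovariety W.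
Proof.
move=> VW [V_unit V_prod V_sub V_image]; split.
- exact/VW.
- by move=> S T /VW VS /VW VT; apply/VW/V_prod.
- by move=> S T f hom_f inj_f /VW VS; apply/VW/(V_sub _ _ f).
- by move=> S T f hom_f onto_f /VW VS; apply/VW/(V_image _ _ f).
Qed.

Lemma gen_pv_join_irreducible (S : finSemigroup) :
  pseudovariety (Excl S) -> join_irreducible (gen_pv S).
Proof.
move=> pv_excl X pvX sub; apply: NNPP => none.
have in_excl W : X W -> subclass W (Excl S).
  move=> XW T WT gen; apply: none; exists W => // U genU.
  exact: genU (pvX W XW) (gen _ (pvX W XW) WT).
exact: (sub S (@gen_pv_refl S) (Excl S) pv_excl in_excl (@gen_pv_refl S)).
Qed.

Theorem theorem5p3 (p n : nat) : prime p -> 0 < n ->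
  join_irreducible (gen_pv (sg_Z (p ^ n))) /\
  (forall T : finSemigroup, Excl (sg_Z (p ^ n)) T <-> sat_Zpn_identity p n T).
Proof.
move=> pr_p n_gt0; split; last by move=> T; apply: Excl_Zpn.
apply/gen_pv_join_irreducible/(pseudovariety_equiv _ (sat_omega_identity_pv (Zpn_exp p n))).
by move=> T; rewrite -sat_Zpn_identityE; apply: iff_sym; apply: Excl_Zpn.
Qed.
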